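(* Let $d$ be an odd prime and $n\ge1$. Let $P=Z_1^{a_1}X_1^{b_1}\cdots Z_n^{a_n}X_n^{b_n}$ and $Q=Z_1^{c_1}X_1^{e_1}\cdots Z_n^{c_n}X_n^{e_n}$ be elements of $\mathcal{P}_d^n$ with $(P,Q)=\sum_{i=1}^n(a_ie_i-b_ic_i)=1$ in $\mathbb{Z}_d$. Then there exists a circuit $M$ built from the gates $C_X$, $F$, $S$ such that, for some exponents $a'_i,b'_i,c'_i,e'_i\in\mathbb{Z}_d$ and complex scalars $\lambda,\mu$, $$MPM^{-1}=\lambda Z_1^{a'_1}X_1^{b'_1}\cdots Z_n^{a'_n}X_n^{b'_n},\qquad MQM^{-1}=\mu Z_1^{c'_1}X_1^{e'_1}\cdots Z_n^{c'_n}X_n^{e'_n},$$ and there exists $j\in\{1,\dots,n\}$ with $a'_je'_j-b'_jc'_j=1$ in $\mathbb{Z}_d$.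
   Context: $\omega=e^{2\pi i/d}$; $X|j\rangle=|j+1\bmod d\rangle$, $Z|j\rangle=\omega^j|j\rangle$, $F|j\rangle=\frac1{\sqrt d}\sum_m\omega^{jm}|m\rangle$, $S|j\rangle=\omega^{j(j+1)/2}|j\rangle$, $C_X|j\rangle|k\rangle=|j\rangle|j+k\bmod d\rangle$. Subscript $i$ on $X_i,Z_i$ means the operator acts on qudit $i$. $\mathcal{P}_d^n$ is the group of operators $\omega^kZ_1^{a_1}X_1^{b_1}\cdots Z_n^{a_n}X_n^{b_n}$. A circuit built from a gate set is a finite product of gates from the set, one-qudit gates on any qudit, two-qudit gates on any ordered pair of distinct qudits. *)

From HB Require Import structures.
From mathcomp Require Import all_boot all_order all_algebra all_field.
Set Implicit Arguments. Unset Strict Implicit. Unset Printing Implicit Defensive.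
Import Order.TTheory GRing.Theory Num.Theory.
Local Open Scope ring_scope.

(* omega = e^{2 pi i / d}: d.-root (-1) is e^{i pi / d} (minimal argument). *)
Definition omega (d : nat) : algC := (d.-root (-1)) ^+ 2.

(* computational basis of n qudits: |x>, x : 'I_n -> Z_d *)
Definition basis (n d : nat) := {ffun 'I_n -> 'Z_d}.

(* operators on (C^d)^{\otimes n}, as matrices indexed by an enumeration of the basis *)
Definition Op (n d : nat) := 'M[algC]_#|basis n d|.

Definition opm n d (f : basis n d -> basis n d -> algC) : Op n d :=
  \matrix_(r, c) f (enum_val r) (enum_val c).

Definition upd n d (x : basis n d) (k : 'I_n) (v : 'Z_d) : basis n d :=
  [ffun l => if l == k then v else x l].

Definition Xq n d (i : 'I_n) : Op n d :=
  opm (fun y x => (y == upd x i (x i + 1)%R)%:R).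
Definition Zq n d (i : 'I_n) : Op n d :=
  opm (fun y x => (y == x)%:R * omega d ^+ (x i : nat)).
(* F|j> = d^{-1/2} sum_m omega^{jm} |m> on qudit i *)
Definition Fq n d (i : 'I_n) : Op n d :=
  opm (fun y x => [forall k, (k != i) ==> (y k == x k)]%:R
                  * (sqrtC (d%:R))^-1 * omega d ^+ ((x i : nat) * (y i : nat))).
Definition Sq n d (i : 'I_n) : Op n d :=
  opm (fun y x => (y == x)%:R * omega d ^+ (((x i : nat) * (x i).+1)./2)).
(* C_X with control i, target k: |j>_i|l>_k -> |j>_i|j+l>_k *)
Definition CXq n d (i k : 'I_n) : Op n d :=
  opm (fun y x => (y == upd x k (x i + x k)%R)%:R).

Inductive gate (n : nat) : Type :=
| GF of 'I_n
| GS of 'I_n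
| GCX (i k : 'I_n) of i != k.

Definition gate_mx n d (g : gate n) : Op n d :=
  match g with
  | GF i => Fq d i
  | GS i => Sq d i
  | @GCX _ i k _ => CXq d i k
  end.

Definition circuit_mx n d (s : seq (gate n)) : Op n d :=
  \prod_(g <- s) gate_mx d g.

Definition pauli n d (a b : 'I_n -> 'Z_d) : Op n d :=
  \prod_(i < n) (Zq d i ^+ (a i : nat) * Xq d i ^+ (b i : nat)).

From HB Require Import structures.
From mathcomp Require Import all_boot all_order all_algebra all_field.
From mathcomp Require Import ring.
Set Implicit Arguments. Unset Strict Implicit. Unset Printing Implicit Defensive.
Import Order.TTheory GRing.Theory Num.Theory.
Local Open Scope ring_scope.

(** The circuit uses only S and C_X gates.  These are monomial matrices, so
    conjugating a Pauli operator by them yields a scalar multiple of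
    a Pauli operator, acting on the exponent pair (a, b) by a transvection.
    S_j adds b_j to a_j; C_X with control k and target j adds b_k to b_j and
    subtracts a_j from a_k.  With the local forms w_j = a_j e_j - b_j c_j and
    the cross terms x_jk = a_j e_k - b_k c_j, the power C_X^t adds t x_jk to
    w_j, so over the field Z_d any nonzero cross term can be used to make
    w_j = 1.  If all cross terms vanish, also after applying some S_j, then
    the identity w_j w_k = x_jk x_kj + (b_j e_k - b_k e_j)(a_j c_k - a_k c_j)
    shows that at most one w_j is nonzero; that one equals the sum of all the
    w_i, which is 1. *)

Local Notation pexp n d := (('I_n -> 'Z_d) * ('I_n -> 'Z_d))%type.

Section MonomialMatrices.
Variables (T : finType) (R : comRingType).

Definition monomx (s : T -> T) (f : T -> R) : 'M[R]_#|T| :=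
  \matrix_(r, c) ((enum_val r == s (enum_val c))%:R * f (enum_val c)).

Lemma monomxE s f r c :
  monomx s f r c = (enum_val r == s (enum_val c))%:R * f (enum_val c).
Proof. by rewrite mxE. Qed.

Lemma eq_monomx s s' f f' : s =1 s' -> f =1 f' -> monomx s f = monomx s' f'.
Proof. by move=> eq_s eq_f; apply/matrixP=> r c; rewrite !monomxE eq_s eq_f. Qed.

Lemma monomx1 : monomx id (fun=> 1) = 1.
Proof. by apply/matrixP=> r c; rewrite monomxE mxE mulr1 (inj_eq enum_val_inj). Qed.

Lemma monomxM s f s' f' :
  monomx s f * monomx s' f' = monomx (s \o s') (fun x => f (s' x) * f' x).
Proof.
apply/matrixP=> r c; rewrite mxE monomxE.
rewrite (bigD1 (enum_rank (s' (enum_val c)))) //= !monomxE enum_rankK eqxx mul1r.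
rewrite big1 ?addr0 ?mulrA // => j j_neq; rewrite !monomxE.
suff /negbTE-> : enum_val j != s' (enum_val c) by rewrite mul0r mulr0.
by apply: contraNneq j_neq => <-; rewrite enum_valK.
Qed.

Lemma scale_monomx (k : R) s f : k *: monomx s f = monomx s (fun x => k * f x).
Proof. by apply/matrixP=> r c; rewrite mxE !monomxE mulrCA. Qed.

Lemma monomx_diagX f m : monomx id f ^+ m = monomx id (fun x => f x ^+ m).
Proof.
elim: m => [|m IHm]; first by rewrite expr0 -monomx1; apply: eq_monomx.
by rewrite exprS IHm monomxM; apply: eq_monomx => x //=; rewrite exprS.
Qed.

Lemma monomx_permX s m : monomx s (fun=> 1) ^+ m = monomx (iter m s) (fun=> 1).
Proof.
elim: m => [|m IHm]; first by rewrite expr0 -monomx1; apply: eq_monomx.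
by rewrite exprS IHm monomxM; apply: eq_monomx => x //=; rewrite mulr1.
Qed.

End MonomialMatrices.

Lemma monomx_unit (T : finType) (F : fieldType) (s s' : T -> T) (f : T -> F) :
  cancel s s' -> cancel s' s -> (forall x, f x != 0) -> monomx s f \in unitmx.
Proof.
move=> sK s'K f_neq0.
suff /mulmx1_unit[] : monomx s f *m monomx s' (fun x => (f (s' x))^-1) = 1%:M by [].
by rewrite mulmxE monomxM -[1%:M]monomx1; apply: eq_monomx => x //=; rewrite divff.
Qed.

Section RootOfUnity.
Variable d : nat.
Hypothesis d_gt1 : (1 < d)%N.

Lemma omega_exp_d : omega d ^+ d = 1.
Proof.
by rewrite /omega -exprM mulnC exprM rootCK ?(ltnW d_gt1) // expr2 mulN1r opprK.
Qed.

Lemma omega_neq0 : omega d != 0.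
Proof.
apply: contra_eq_neq omega_exp_d => ->.
by rewrite expr0n gtn_eqF ?(ltnW d_gt1) // eq_sym oner_neq0.
Qed.

Definition omegaZ (t : 'Z_d) : algC := omega d ^+ t.

Lemma omegaZ_nat m : omegaZ m%:R = omega d ^+ m.
Proof. by rewrite /omegaZ val_Zp_nat // expr_mod // omega_exp_d. Qed.

Lemma omegaZD s t : omegaZ (s + t) = omegaZ s * omegaZ t.
Proof. by rewrite -[s]natr_Zp -[t]natr_Zp -natrD !omegaZ_nat exprD. Qed.

Lemma omegaZX t m : omegaZ t ^+ m = omegaZ (t * m%:R).
Proof. by rewrite -[t]natr_Zp -natrM !omegaZ_nat exprM. Qed.

Lemma omegaZ_neq0 t : omegaZ t != 0.
Proof. exact: expf_neq0 omega_neq0. Qed.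

End RootOfUnity.

Lemma half_triangleD (R : comUnitRingType) (x y : R) :
  (2%:R : R) \is a GRing.unit ->
  (x + y) * (x + y + 1) / 2%:R = x * (x + 1) / 2%:R + y * (y + 1) / 2%:R + x * y.
Proof. by move=> unit2; rewrite -[x * y in RHS](mulrK unit2); ring. Qed.

Section GatesAsMonomials.
Variables (n d : nat).
Hypothesis d_gt1 : (1 < d)%N.
Local Notation basis := (basis n d).

Lemma updE (x : basis) i v l : upd x i v l = if l == i then v else x l.
Proof. by rewrite ffunE. Qed.

Lemma Xq_monomx i : Xq d i = monomx (fun x : basis => upd x i (x i + 1)) (fun=> 1).
Proof. by apply/matrixP=> r c; rewrite monomxE mxE mulr1. Qed.

Lemma Zq_monomx i : Zq d i = monomx id (fun x : basis => omegaZ (x i)).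
Proof. by []. Qed.

Lemma CXq_monomx i k :
  CXq d i k = monomx (fun x : basis => upd x k (x i + x k)) (fun=> 1).
Proof. by apply/matrixP=> r c; rewrite monomxE mxE mulr1. Qed.

Lemma unit_Zp2 : odd d -> (2%:R : 'Z_d) \is a GRing.unit.
Proof. by move=> d_odd; rewrite unitZpE // coprime_sym coprime2n. Qed.

Lemma Sq_monomx i : odd d ->
  Sq d i = monomx id (fun x : basis => omegaZ (x i * (x i + 1) / 2%:R)).
Proof.
move=> d_odd.
transitivity
  (monomx id (fun x : basis => omega d ^+ (((x i : nat) * (x i).+1)./2))) => //.
apply: eq_monomx => // x; rewrite -omegaZ_nat //; congr omegaZ.
apply: (canRL (mulrK (unit_Zp2 d_odd))).
rewrite -natrM muln2 even_halfK; last by rewrite oddM /= andbN.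
by rewrite natrM -natr1 natr_Zp.
Qed.

Lemma ZXq_monomx i (a b : 'Z_d) : Zq d i ^+ a * Xq d i ^+ b =
  monomx (fun x : basis => upd x i (x i + b)) (fun x => omegaZ (a * (x i + b))).
Proof.
have shiftX m x :
    iter m (fun x : basis => upd x i (x i + 1)) x = upd x i (x i + m%:R).
  elim: m => [|m IHm] /=.
    by apply/ffunP => l; rewrite updE addr0; case: eqP => // ->.
  by rewrite IHm; apply/ffunP => l; rewrite !updE eqxx -natr1 addrA; case: eqP.
rewrite Zq_monomx Xq_monomx monomx_diagX monomx_permX monomxM.
apply: eq_monomx => x /=; rewrite shiftX natr_Zp //.
by rewrite updE eqxx omegaZX // natr_Zp mulr1 mulrC.
Qed.

Lemma pauli_monomx (a b : 'I_n -> 'Z_d) : pauli a b =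
  monomx (fun x : basis => [ffun l => x l + b l])
         (fun x => omegaZ (\sum_l a l * (x l + b l))).
Proof.
pose shift (r : seq 'I_n) (x : basis) :=
  [ffun l => if l \in r then x l + b l else x l].
suff prod_uniq r : uniq r -> \prod_(i <- r) (Zq d i ^+ a i * Xq d i ^+ b i) =
    monomx (shift r) (fun x => omegaZ (\sum_(l <- r) a l * (x l + b l))).
  rewrite /pauli prod_uniq ?index_enum_uniq //; apply: eq_monomx => x //.
  by apply/ffunP => l; rewrite !ffunE mem_index_enum.
elim: r => [_|j r IHr /= /andP[j_notin_r uniq_r]].
  rewrite big_nil -monomx1; apply: eq_monomx => x /=; last by rewrite big_nil.
  by apply/ffunP => l; rewrite ffunE.
rewrite big_cons IHr // ZXq_monomx monomxM; apply: eq_monomx => x /=.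
  apply/ffunP => l; rewrite updE !ffunE in_cons.
  by case: eqP => [->|] //=; rewrite (negbTE j_notin_r).
by rewrite big_cons omegaZD // ffunE (negbTE j_notin_r).
Qed.

End GatesAsMonomials.

Section SymplecticExponents.
Variables (n d : nat).
Implicit Types (v u : pexp n d) (i j k : 'I_n).

Definition symS i v : pexp n d :=
  (fun l => if l == i then v.1 l + v.2 l else v.1 l, v.2).

Definition symCX i k v : pexp n d :=
  (fun l => if l == i then v.1 i - v.1 k else v.1 l,
   fun l => if l == k then v.2 k + v.2 i else v.2 l).

Definition symp_at v u j := v.1 j * u.2 j - v.2 j * u.1 j.

Definition symp_cross v u j k := v.1 j * u.2 k - v.2 k * u.1 j.

Lemma iter_symCX k j t v : k != j ->
  let w := iter t (symCX k j) v in
  [/\ w.1 j = v.1 j, w.2 j = v.2 j + t%:R * v.2 k & w.2 k = v.2 k].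
Proof.
move=> k_neq_j; elim: t => [|t [IH1 IH2 IH3]] /=; first by rewrite mul0r addr0.
rewrite (negbTE k_neq_j) eq_sym (negbTE k_neq_j) eqxx IH1 IH2 IH3.
by rewrite -natr1 mulrDl mul1r addrA.
Qed.

Lemma symp_at_iter_symCX k j t v u : k != j ->
  symp_at (iter t (symCX k j) v) (iter t (symCX k j) u) j =
  symp_at v u j + t%:R * symp_cross v u j k.
Proof.
move=> k_neq_j; have [v1 v2 _] := iter_symCX t v k_neq_j.
have [u1 u2 _] := iter_symCX t u k_neq_j.
by rewrite /symp_at /symp_cross v1 v2 u1 u2; ring.
Qed.

Lemma symp_cross_symS j k v u :
  symp_cross (symS j v) (symS j u) j k =
  symp_cross v u j k + (v.2 j * u.2 k - v.2 k * u.2 j).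
Proof. by rewrite /symp_cross /= eqxx; ring. Qed.

Lemma symp_atM v u j k : symp_at v u j * symp_at v u k =
  symp_cross v u j k * symp_cross v u k j
  + (v.2 j * u.2 k - v.2 k * u.2 j) * (v.1 j * u.1 k - v.1 k * u.1 j).
Proof. by rewrite /symp_at /symp_cross; ring. Qed.

Lemma symp_at_pairwise_mul0 v u :
  (forall j k, j != k -> symp_cross v u j k = 0) ->
  (forall j k, j != k -> symp_cross (symS j v) (symS j u) j k = 0) ->
  forall j k, j != k -> symp_at v u j * symp_at v u k = 0.
Proof.
move=> cross0 crossS0 j k j_neq_k.
have k_neq_j : k != j by rewrite eq_sym.
have := crossS0 j k j_neq_k; rewrite symp_cross_symS cross0 // add0r => bb0.
by rewrite symp_atM !cross0 // bb0 !mul0r addr0.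
Qed.

Hypothesis d_prime : prime d.

Lemma unitZp_prime (t : 'Z_d) : t != 0 -> t \is a GRing.unit.
Proof.
move=> t_neq0; have d_gt1 := prime_gt1 d_prime.
rewrite -(natr_Zp t) unitZpE // prime_coprime // gtnNdvd ?lt0n //.
by rewrite -[X in (_ < X)%N](Zp_cast d_gt1).
Qed.

Lemma sum_pairwise_mul0 (x : 'I_n -> 'Z_d) :
  (forall j k, j != k -> x j * x k = 0) -> \sum_j x j = 1 -> exists j, x j = 1.
Proof.
move=> mul0 sum1; have [j xj_neq0] : exists j, x j != 0.
  apply/existsP; apply: contraTT isT; rewrite negb_exists => /forallP x0.
  rewrite -(oner_neq0 'Z_d) -sum1 big1 // => j _.
  by apply/eqP; rewrite -[_ == _]negbK x0.
exists j; rewrite -sum1 (bigD1 j) //= big1 ?addr0 // => k k_neq_j.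
by apply: (mulrI (unitZp_prime xj_neq0)); rewrite mul0 1?eq_sym // mulr0.
Qed.

Lemma symp_at_one_by_symCX k j v u : k != j -> symp_cross v u j k != 0 ->
  exists t, symp_at (iter t (symCX k j) v) (iter t (symCX k j) u) j = 1.
Proof.
move=> k_neq_j cross_neq0.
exists ((1 - symp_at v u j) / symp_cross v u j k : 'Z_d).
by rewrite symp_at_iter_symCX // natr_Zp divrK ?unitZp_prime // addrC subrK.
Qed.

End SymplecticExponents.

Section PauliConjugation.
Variables (n d : nat).
Hypotheses (d_gt1 : (1 < d)%N) (d_odd : odd d).

Definition pauliv (v : pexp n d) : Op n d := pauli v.1 v.2.

Definition acts_on_pauli (M : Op n d) (phi : pexp n d -> pexp n d) :=
  forall v, exists lam : algC, M * pauliv v = lam *: pauliv (phi v) * M.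

Lemma acts_on_pauli1 : acts_on_pauli 1 id.
Proof. by move=> v; exists 1; rewrite scale1r mul1r mulr1. Qed.

Lemma acts_on_pauliM M N phi psi :
  acts_on_pauli M phi -> acts_on_pauli N psi -> acts_on_pauli (M * N) (phi \o psi).
Proof.
move=> actM actN v; have [mu muP] := actN v; have [lam lamP] := actM (psi v).
exists (mu * lam); rewrite -!mulmxE in muP lamP *.
by rewrite -mulmxA muP mulmxA -scalemxAr lamP -!scalemxAl scalerA mulmxA.
Qed.

Lemma acts_on_pauli_conj M phi (c : algC) v : M \in unitmx -> acts_on_pauli M phi ->
  exists lam : algC, M * (c *: pauliv v) * invmx M = lam *: pauliv (phi v).
Proof.
move=> unitM actM; have [lam lamP] := actM v; exists (c * lam).
rewrite -!mulmxE in lamP *.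
by rewrite -scalemxAr lamP -(scalemxAl c) mulmxK // scalerA.
Qed.

Lemma Sq_acts i : acts_on_pauli (Sq d i) (symS i).
Proof.
case=> a b; exists (omegaZ (b i * (b i + 1) / 2%:R - b i * b i)).
rewrite /pauliv Sq_monomx // !pauli_monomx // scale_monomx !monomxM.
apply: eq_monomx => x //=; rewrite !ffunE -!omegaZD //; congr omegaZ.
have -> : \sum_l (if l == i then a l + b l else a l) * (x l + b l) =
    \sum_l a l * (x l + b l) + b i * (x i + b i).
  rewrite (bigD1 i) //= [in RHS](bigD1 i) //= eqxx.
  rewrite -addrA [_ + b i * _]addrC addrA mulrDl.
  by congr (_ + _); apply: eq_bigr => l /negbTE ->.
by rewrite half_triangleD ?unit_Zp2 //; ring.
Qed.

Lemma CXq_acts i k : i != k -> acts_on_pauli (CXq d i k) (symCX i k).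
Proof.
move=> i_neq_k [a b]; exists 1.
rewrite /pauliv CXq_monomx !pauli_monomx // scale_monomx !monomxM.
apply: eq_monomx => x /=.
  by apply/ffunP => l; rewrite !(updE, ffunE); case: eqP => _ //; ring.
rewrite !mul1r mulr1; congr omegaZ.
have k_neq_i : k != i by rewrite eq_sym.
rewrite (bigD1 i) // (bigD1 k) //= [in RHS](bigD1 i) // [in RHS](bigD1 k) //=.
rewrite !updE !eqxx (negbTE i_neq_k) (negbTE k_neq_i).
rewrite [in RHS](eq_bigr (fun l => a l * (x l + b l))); first by ring.
by move=> l /andP[/negbTE-> /negbTE l_neq_k]; rewrite updE !l_neq_k.
Qed.

Definition realizable (phi : pexp n d -> pexp n d) := exists s : seq (gate n),
  circuit_mx d s \in unitmx /\ acts_on_pauli (circuit_mx d s) phi.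

Lemma realizable_id : realizable id.
Proof.
exists [::]; rewrite /circuit_mx big_nil.
by split; [exact: unitmx1 | exact: acts_on_pauli1].
Qed.

Lemma realizable_comp phi psi :
  realizable phi -> realizable psi -> realizable (phi \o psi).
Proof.
move=> [s [unit_s act_s]] [t [unit_t act_t]]; exists (s ++ t).
rewrite /circuit_mx big_cat /= -/(circuit_mx d s) -/(circuit_mx d t).
by split; [rewrite -mulmxE unitmx_mul unit_s | exact: acts_on_pauliM].
Qed.

Lemma realizable_iter phi t : realizable phi -> realizable (iter t phi).
Proof.
move=> real_phi; elim: t => [|t IHt]; first exact: realizable_id.
exact: realizable_comp.
Qed.

Lemma realizable_gate (g : gate n) phi : gate_mx d g \in unitmx ->
  acts_on_pauli (gate_mx d g) phi -> realizable phi.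
Proof. by exists [:: g]; rewrite /circuit_mx big_seq1. Qed.

Lemma realizable_symS i : realizable (symS i).
Proof.
apply: (@realizable_gate (GS i)); last exact: Sq_acts.
by rewrite /= Sq_monomx // (@monomx_unit _ _ _ id) // => x; exact: omegaZ_neq0.
Qed.

Lemma realizable_symCX i k : i != k -> realizable (symCX i k).
Proof.
move=> i_neq_k; apply: (@realizable_gate (GCX i_neq_k)); last exact: CXq_acts.
rewrite /= CXq_monomx.
apply: (@monomx_unit _ _ _ (fun x => upd x k (x k - x i))) => [x|x|_];
  last exact: oner_neq0.
all: apply/ffunP => l; rewrite !updE eqxx (negbTE i_neq_k).
all: by case: eqP => [->|]; rewrite ?eqxx //; ring.
Qed.

End PauliConjugation.

Lemma realizable_symp_at_one n d (d_prime : prime d) (d_odd : odd d)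
    (v u : pexp n d) :
  \sum_i symp_at v u i = 1 ->
  exists2 phi : pexp n d -> pexp n d,
    realizable phi & exists j, symp_at (phi v) (phi u) j = 1.
Proof.
move=> sum1.
have by_cross (psi : pexp n d -> pexp n d) j k : realizable psi -> j != k ->
    symp_cross (psi v) (psi u) j k != 0 ->
    exists2 phi : pexp n d -> pexp n d,
      realizable phi & exists j, symp_at (phi v) (phi u) j = 1.
  move=> real_psi j_neq_k cross_neq0; have k_neq_j : k != j by rewrite eq_sym.
  have [t one_t] := symp_at_one_by_symCX d_prime k_neq_j cross_neq0.
  exists (iter t (symCX k j) \o psi); last by exists j.
  apply: realizable_comp real_psi; apply: realizable_iter.
  exact (realizable_symCX (prime_gt1 d_prime) k_neq_j).
pose cross_at (psi : 'I_n -> pexp n d -> pexp n d) (jk : 'I_n * 'I_n) :=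
  (jk.1 != jk.2) && (symp_cross (psi jk.1 v) (psi jk.1 u) jk.1 jk.2 != 0).
have [[j k] /andP[/= j_neq_k]|cross0] := pickP (cross_at (fun=> id)).
  exact: by_cross (realizable_id n d) j_neq_k.
have [[j k] /andP[/= j_neq_k]|crossS0] := pickP (cross_at (@symS n d)).
  exact: by_cross (realizable_symS (prime_gt1 d_prime) d_odd j) j_neq_k.
exists id; first exact: realizable_id.
apply: sum_pairwise_mul0 => //; apply: symp_at_pairwise_mul0 => j k j_neq_k.
  by apply/eqP; have := cross0 (j, k); rewrite /cross_at /= j_neq_k => /negbFE.
by apply/eqP; have := crossS0 (j, k); rewrite /cross_at /= j_neq_k => /negbFE.
Qed.

Theorem lemma8 (d n : nat) (Hd : prime d) (Hodd : odd d) (Hn : (0 < n)%N)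
  (k l : nat) (a b c e : 'I_n -> 'Z_d) :
  \sum_(i < n) (a i * e i - b i * c i) = 1 ->
  let P := omega d ^+ k *: pauli a b in
  let Q := omega d ^+ l *: pauli c e in
  exists (s : seq (gate n)) (a' b' c' e' : 'I_n -> 'Z_d) (lam mu : algC),
    let M := circuit_mx d s in
    [/\ M * P * invmx M = lam *: pauli a' b',
        M * Q * invmx M = mu *: pauli c' e' &
        exists j : 'I_n, a' j * e' j - b' j * c' j = 1].
Proof.
move=> sum1 P Q.
have [phi [s [unit_M act_M]] [j phi_j]] :=
  realizable_symp_at_one Hd Hodd (v := (a, b)) (u := (c, e)) sum1.
have [lam conjP] := acts_on_pauli_conj (omega d ^+ k) (a, b) unit_M act_M.
have [mu conjQ] := acts_on_pauli_conj (omega d ^+ l) (c, e) unit_M act_M.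
exists s, (phi (a, b)).1, (phi (a, b)).2, (phi (c, e)).1, (phi (c, e)).2, lam, mu.
by split=> //; exists j.
Qed.
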